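(* Let $K$ be a commutative integral domain, $n,r\ge1$, $V$ a free $K$-module of rank $n$, and $\Phi:K\mathfrak{S}_r\to\operatorname{End}_K(V^{\otimes r})$ the representation given by right place permutations $(u_1\otimes\cdots\otimes u_r)\sigma=u_{1\sigma^{-1}}\otimes\cdots\otimes u_{r\sigma^{-1}}$. Let $P$ be the set of partitions $\lambda$ of $r$ with $\lambda_1>n$, and let $A[P]\subseteq K\mathfrak{S}_r$ be the $K$-span of all $y_{ST}$ where $(S,T)$ ranges over pairs of standard $\lambda$-tableaux with $\lambda\in P$. Then $A[P]\subseteq\ker\Phi$.
   Context: For a composition $\lambda$ of $r$, a $\lambda$-tableau is a bijective filling of the Young diagram of shape $\lambda$ (row $i$ has $\lambda_i$ boxes) with $1,\dots,r$; it is row standard if entries increase along rows, standard if they also increase down columns. $\mathfrak{S}_r$ acts on tableaux on the right by permuting entries. $T^\lambda$ is the $\lambda$-tableau with $1,\dots,r$ entered in order left to right along rows, top to bottom; $\mathfrak{S}_\lambda$ is its row stabilizer (the Young subgroup). For a row standard $\lambda$-tableau $T$, $d(T)\in\mathfrak{S}_r$ is the unique element with $T=T^\lambda d(T)$. Set $y_\lambda=\sum_{w\in\mathfrak{S}_\lambda}(\operatorname{sgn}w)w$ and $y_{ST}=d(S)^{-1}y_\lambda d(T)$. Permutations compose as $a(\sigma\tau)=(a\sigma)\tau$. *)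

From HB Require Import structures.
From mathcomp Require Import all_boot all_order all_algebra all_fingroup.
Set Implicit Arguments. Unset Strict Implicit. Unset Printing Implicit Defensive.
Import GRing.Theory.
Local Open Scope ring_scope.

(* Boxes of the Young diagram of
   a composition [lam] of [r] are numbered 0..r-1 in reading order (left to
   right along rows, top to bottom).  [box_pos lam b] = (row, column) of box b
   (both 0-based). *)
Fixpoint box_pos (lam : seq nat) (b : nat) : nat * nat :=
  match lam with
  | [::] => (0%N, b)
  | l :: lam' => if (b < l)%N then (0%N, b)
                 else let p := box_pos lam' (b - l) in (p.1.+1, p.2)
  end.

Definition is_partition (r : nat) (lam : seq nat) : bool :=
  [&& sumn lam == r, all (fun x => 0 < x)%N lam & sorted geq lam].

(* A lam-tableau (lam a composition of r) is a bijective filling of the boxes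
   by the entries; entries 1..r are encoded 0-based as 'I_r.  It is thus a
   permutation T : box |-> entry.  T^lam is the identity (box b holds entry b),
   and the right action of S_r on entries gives (T^lam d) = d, hence d(T) = T
   (with mathcomp's convention (s * t) x = t (s x), i.e. a(st) = (as)t). *)
Definition tableau (r : nat) := {perm 'I_r}.

Definition row_standard r (lam : seq nat) (T : tableau r) : bool :=
  [forall b : 'I_r, forall b' : 'I_r,
     ((box_pos lam b).1 == (box_pos lam b').1) &&
     ((box_pos lam b).2 < (box_pos lam b').2)%N ==> (T b < T b')%N].

Definition standard r (lam : seq nat) (T : tableau r) : bool :=
  row_standard lam T &&
  [forall b : 'I_r, forall b' : 'I_r,
     ((box_pos lam b).2 == (box_pos lam b').2) &&
     ((box_pos lam b).1 < (box_pos lam b').1)%N ==> (T b < T b')%N].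

Definition young r (lam : seq nat) (w : {perm 'I_r}) : bool :=
  [forall b : 'I_r, (box_pos lam (w b)).1 == (box_pos lam b).1].

Notation grpalg K r := {ffun {perm 'I_r} -> K}.

(* y_{ST} = d(S)^{-1} y_lam d(T) with y_lam = sum_{w in S_lam} sgn(w) w. *)
Definition yST (K : comNzRingType) r (lam : seq nat) (S T : tableau r)
  : grpalg K r :=
  [ffun g => \sum_(w : {perm 'I_r} | young lam w && (S^-1 * w * T == g)%g)
                (-1) ^+ odd_perm w].

Definition in_AP (K : comNzRingType) (n r : nat) (x : grpalg K r) : Prop :=
  exists s : seq ((seq nat * (tableau r * tableau r)) * K),
    all (fun t => [&& is_partition r t.1.1, (n < head 0%N t.1.1)%N,
                      standard t.1.1 t.1.2.1 & standard t.1.1 t.1.2.2]) s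
    /\ forall g, x g = \sum_(t <- s) t.2 * yST K t.1.1 t.1.2.1 t.1.2.2 g.

(* V = K^n with basis e_1..e_n; V^{(x) r} is free with basis the pure tensors
   e_{i 1} (x) ... (x) e_{i r}, indexed by i : {ffun 'I_r -> 'I_n}.
   Right place permutation: (u_1 (x)...(x) u_r) s = u_{1 s^-1} (x)...(x) u_{r s^-1},
   so basis index i goes to k |-> i (s^-1 k). *)
Definition place_act (n r : nat) (s : {perm 'I_r}) (i : {ffun 'I_r -> 'I_n})
  : {ffun 'I_r -> 'I_n} := [ffun k => i (s^-1 k)%g].

(* Phi x as the matrix (w.r.t. the tensor basis) of the endomorphism of
   V^{(x) r}: entry (i, j) = coefficient of basis vector j in Phi(x)(e_i). *)
Definition Phi (K : comNzRingType) (n r : nat) (x : grpalg K r)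
  : {ffun {ffun 'I_r -> 'I_n} -> {ffun {ffun 'I_r -> 'I_n} -> K}} :=
  [ffun i => [ffun j => \sum_(s : {perm 'I_r}) x s * (place_act s i == j)%:R]].

Definition in_kerPhi (K : comNzRingType) (n r : nat) (x : grpalg K r) : Prop :=
  Phi n x = 0.

From mathcomp Require Import all_boot all_order all_algebra all_fingroup.
Set Implicit Arguments. Unset Strict Implicit. Unset Printing Implicit Defensive.
Import GRing.Theory.
Local Open Scope ring_scope.

(* Fix a basis tensor e_i.  Since the first row of lam has more than n boxes,
   two of its boxes carry the same index of e_i d(S)^-1, so the transposition t
   of these boxes lies in the row stabilizer S_lam and fixes that tensor.
   Pairing w with t w cancels the signed sum y_lam, hence every y_ST maps e_i
   to 0; A[P] is spanned by such y_ST. *)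

Lemma place_actM n r (s t : {perm 'I_r}) (i : {ffun 'I_r -> 'I_n}) :
  place_act (s * t)%g i = place_act t (place_act s i).
Proof. by apply/ffunP => k; rewrite !ffunE invMg permM. Qed.

Lemma head_le_sumn (lam : seq nat) : (head 0%N lam <= sumn lam)%N.
Proof. by case: lam => [|l lam] //=; apply: leq_addr. Qed.

Lemma box_pos_row0 (lam : seq nat) b :
  (b < head 0%N lam)%N -> (box_pos lam b).1 = 0%N.
Proof. by case: lam => [|l lam] //= ->. Qed.

Lemma young_mul r lam (t w : {perm 'I_r}) :
  young lam t -> young lam w -> young lam (t * w)%g.
Proof.
move=> /forallP yt /forallP yw; apply/forallP => b.
by rewrite permM (eqP (yw _)) (eqP (yt _)).
Qed.

Lemma young_tperm r lam (a b : 'I_r) :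
  (a < head 0%N lam)%N -> (b < head 0%N lam)%N -> young lam (tperm a b).
Proof.
move=> ha hb; apply/forallP => x.
by case: tpermP => [->|->|_ _] //; rewrite !box_pos_row0.
Qed.

Lemma young_tpermMl r lam (a b : 'I_r) (w : {perm 'I_r}) :
  young lam (tperm a b) -> young lam (tperm a b * w)%g = young lam w.
Proof.
move=> yt; apply/idP/idP; last exact: young_mul.
by move=> ytw; rewrite -(mul1g w) -(tperm2 a b) -mulgA; apply: young_mul.
Qed.

Lemma sum_yST_mul (K : comNzRingType) r lam (S T : tableau r)
  (c : {perm 'I_r} -> K) :
  \sum_s yST K lam S T s * c s =
  \sum_(w | young lam w) (-1) ^+ odd_perm w * c (S^-1 * w * T)%g.
Proof.
rewrite [RHS](partition_big (fun w => S^-1 * w * T)%g xpredT) //=.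
apply: eq_bigr => s _; rewrite ffunE mulr_suml.
by apply: eq_bigr => w /andP[_ /eqP ->].
Qed.

Lemma signed_sum_tperm_invariant (R : pzRingType) (T : finType) (a b : T)
  (P : pred {perm T}) (F : {perm T} -> R) :
  a != b -> (forall w, P (tperm a b * w)%g = P w) ->
  (forall w, F (tperm a b * w)%g = F w) ->
  \sum_(w | P w) (-1) ^+ odd_perm w * F w = 0.
Proof.
move=> nab PtK FtK; rewrite (bigID (fun w => odd_perm w)) /=.
rewrite (reindex_inj (mulgI (tperm a b))) /=.
under eq_bigl => w do rewrite PtK odd_mul_tperm nab addTb.
rewrite -big_split /=; apply: big1 => w /andP[_ /negbTE ev].
by rewrite FtK odd_mul_tperm nab ev /= expr1 expr0 mulN1r mul1r addNr.
Qed.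

Lemma pigeonhole_pair n m r (f : 'I_r -> 'I_n) :
  (n < m)%N -> (m <= r)%N ->
  exists a b : 'I_r, [/\ a != b, (a < m)%N, (b < m)%N & f a = f b].
Proof.
move=> nm mr; have n1r : (n.+1 <= r)%N := leq_trans nm mr.
pose g (k : 'I_n.+1) := f (widen_ord n1r k).
have /injectivePn [k1 [k2 nk fk]] : ~~ injectiveb g.
  by apply/injectiveP => /leq_card; rewrite !card_ord ltnn.
exists (widen_ord n1r k1), (widen_ord n1r k2); split => //=.
- exact: leq_trans (ltn_ord k1) nm.
- exact: leq_trans (ltn_ord k2) nm.
Qed.

Lemma Phi_yST_entry (K : comNzRingType) n r lam (S T : tableau r)
  (i j : {ffun 'I_r -> 'I_n}) :
  (n < head 0%N lam)%N -> sumn lam = r ->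
  \sum_s yST K lam S T s * (place_act s i == j)%:R = 0.
Proof.
move=> nlam sum_lam; rewrite sum_yST_mul.
pose iS := place_act S^-1 i.
have [a [b [nab ha hb iSab]]] :=
  pigeonhole_pair iS nlam (leq_trans (head_le_sumn lam) (eq_leq sum_lam)).
have yt := young_tperm ha hb.
have iS_fixed : place_act (tperm a b) iS = iS.
  by apply/ffunP => k; rewrite ffunE tpermV; case: tpermP => [->|->|].
apply: (@signed_sum_tperm_invariant _ _ a b (young lam)
          (fun w => (place_act (S^-1 * w * T)%g i == j)%:R) nab) => w.
- exact: young_tpermMl yt.
- by rewrite !place_actM -/iS iS_fixed.
Qed.

Theorem lemma3p4 (K : idomainType) (n r : nat) (hn : (1 <= n)%N) (hr : (1 <= r)%N)
  (x : grpalg K r) : in_AP n x -> in_kerPhi n x.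
Proof.
case=> s [s_in_P x_span]; apply/ffunP => i; apply/ffunP => j; rewrite !ffunE.
under eq_bigr => g _ do rewrite x_span mulr_suml.
rewrite exchange_big /= big_seq; apply: big1 => t t_in_s.
have /and4P[/and3P[/eqP sum_lam _ _] nlam _ _] := allP s_in_P t t_in_s.
under eq_bigr => g _ do rewrite -mulrA.
by rewrite -mulr_sumr Phi_yST_entry // mulr0.
Qed.
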